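(* Fix $n\ge3$ and $M>0$ satisfying (A) and (B), and consider the environments $\Gamma^\epsilon$. Then for all sufficiently small $\epsilon>0$, the unanimity rule $f^{(n)}$ maximizes $W^\epsilon(f)$ among all SCFs $f:V^n\to[0,1]$ that are ordinal and anonymous.
   Context: Fix $n\ge 3$ agents $N=\{1,\dots,n\}$, choosing between Reform $R$ (agent $i$'s utility $v_i$) and Status quo $S$ (utility $0$). Let $M>0$ satisfy (A): $\frac{2}{n}\left[-M^2+M+n-2\right]+\frac{n-2}{n}\left[2M+n-4\right]<0$, and (B): $2M-(n-2)>0$. Let $V=\{-M^2,-1,1,M\}$. For $\epsilon\in[0,1/4]$, the environment $\Gamma^\epsilon$ has independent values $\tilde v_1,\dots,\tilde v_n$ with distributions: for agents $1,2$ (''high-stakes''): $\Pr(-M^2)=0.5-\epsilon$, $\Pr(-1)=\epsilon$, $\Pr(1)=\epsilon$, $\Pr(M)=0.5-\epsilon$; for agents $3,\dots,n$ (''low-stakes''): $\Pr(-M^2)=\epsilon$, $\Pr(-1)=0.5-\epsilon$, $\Pr(1)=0.5-\epsilon$, $\Pr(M)=\epsilon$. An SCF is any $f:V^n\to[0,1]$ (probability of choosing $R$). $f$ is anonymous if $f(v)=f(\pi v)$ for every $v\in V^n$ and every permutation $\pi$ of $N$, where $\pi v=(v_{\pi(1)},\dots,v_{\pi(n)})$. For $v\in V^n$ let $\chi(v)=\{i:v_i>0\}$; $f$ is ordinal if $f(v)=f(v')$ whenever $\chi(v)=\chi(v')$. The unanimity rule is $f^{(n)}(v)=1$ if $|\chi(v)|=n$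 and $0$ otherwise. The welfare of $f$ in $\Gamma^\epsilon$ is $W^\epsilon(f)=\mathbb{E}^\epsilon\big(f(\tilde v)\sum_i\tilde v_i\big)$, expectation under the distributions of $\Gamma^\epsilon$. *)

From HB Require Import structures.
From mathcomp Require Import all_boot all_order all_algebra all_fingroup.
From mathcomp Require Import reals.
Set Implicit Arguments. Unset Strict Implicit. Unset Printing Implicit Defensive.
Import Order.TTheory GRing.Theory Num.Theory.
Local Open Scope ring_scope.

(* Labels of the four values of V = {-M^2, -1, 1, M}. *)
Inductive vlab := LmM2 | Lm1 | L1 | LM.

Definition vlab_code (x : vlab) : 'I_4 :=
  match x with LmM2 => inord 0 | Lm1 => inord 1 | L1 => inord 2 | LM => inord 3 end.
Definition vlab_decode (i : 'I_4) : vlab :=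
  match val i with 0 => LmM2 | 1 => Lm1 | 2 => L1 | _ => LM end.
Lemma vlab_codeK : cancel vlab_code vlab_decode.
Proof. by case; rewrite /vlab_decode /= inordK. Qed.
HB.instance Definition _ := Finite.copy vlab (can_type vlab_codeK).

Definition vval (R : realType) (M : R) (x : vlab) : R :=
  match x with LmM2 => - M ^+ 2 | Lm1 => -1 | L1 => 1 | LM => M end.

(* Value profiles v in V^n, agents indexed by 'I_n (agent i+1 of the paper is i). *)
Definition profile (n : nat) := {ffun 'I_n -> vlab}.

(* Individual distributions of Gamma^eps: agents 1,2 (indices 0,1) are high-stakes. *)
Definition prob_i (R : realType) (n : nat) (eps : R) (i : 'I_n) (x : vlab) : R :=
  if (val i < 2)%N then
    match x with LmM2 => 1/2 - eps | Lm1 => eps | L1 => eps | LM => 1/2 - eps end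
  else
    match x with LmM2 => eps | Lm1 => 1/2 - eps | L1 => 1/2 - eps | LM => eps end.

Definition prob_profile (R : realType) (n : nat) (eps : R) (v : profile n) : R :=
  \prod_(i < n) prob_i eps i (v i).

Definition welfare (R : realType) (n : nat) (M eps : R) (f : profile n -> R) : R :=
  \sum_(v : profile n) prob_profile eps v * (f v * \sum_(i < n) vval M (v i)).

Definition is_SCF (R : realType) (n : nat) (f : profile n -> R) : Prop :=
  forall v, 0 <= f v <= 1.

Definition permute_profile (n : nat) (s : 'S_n) (v : profile n) : profile n :=
  [ffun i => v (s i)].

Definition anonymous (R : realType) (n : nat) (f : profile n -> R) : Prop :=
  forall (v : profile n) (s : 'S_n), f v = f (permute_profile s v).

Definition chi (R : realType) (n : nat) (M : R) (v : profile n) : {set 'I_n} :=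
  [set i | 0 < vval M (v i)].

Definition ordinal_scf (R : realType) (n : nat) (M : R) (f : profile n -> R) : Prop :=
  forall v v' : profile n, chi M v = chi M v' -> f v = f v'.

Definition unanimity (R : realType) (n : nat) (M : R) (v : profile n) : R :=
  if #|chi M v| == n then 1 else 0.

Definition condA (R : realType) (n : nat) (M : R) : Prop :=
  (2 / n%:R) * (- M ^+ 2 + M + n%:R - 2) + ((n%:R - 2) / n%:R) * (2 * M + n%:R - 4) < 0.

Definition condB (R : realType) (n : nat) (M : R) : Prop :=
  2 * M - (n%:R - 2) > 0.

From mathcomp Require Import all_boot all_order all_algebra all_fingroup reals.
From mathcomp Require Import ring lra.
Set Implicit Arguments. Unset Strict Implicit. Unset Printing Implicit Defensive.
Import Order.TTheory GRing.Theory Num.Theory.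
Local Open Scope ring_scope.

(* An ordinal SCF is a weight phi(A) in [0, 1] on each set A = chi(v) of
   approving agents.  Every agent is positive with probability 1/2, so
   W(f) = 2^(1-n) sum_A phi(A) sum_i g_i(i \in A), where g_i(b) is the expected
   value of v_i on the event [v_i > 0] = b.  Anonymity makes phi invariant under
   permutations, hence W(f) only depends on sum_A phi(A) |A| and sum_A phi(A),
   and a non-full A does no better than an (n-1)-element one.  So unanimity is
   optimal as soon as (n-1) P + N <= 0, where P = sum_i g_i(true) and
   N = sum_i g_i(false).  At eps = 0 this quantity is n/2 times the left-hand
   side of (A), and it is affine in eps, so it stays negative for small eps. *)

Lemma sum_vlab (R : realType) (F : vlab -> R) :
  \sum_(x : vlab) F x = F LmM2 + F Lm1 + F L1 + F LM.
Proof.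
rewrite (reindex vlab_decode); last first.
  exists vlab_code => [i _|x _]; last exact: vlab_codeK.
  by case: i => -[|[|[|[|k]]]] Hi //=; apply: val_inj; rewrite /= ?inordK.
by rewrite !big_ord_recr big_ord0 /= add0r.
Qed.

Lemma sum_high_low (R : realType) (n : nat) (x y : R) : (2 <= n)%N ->
  \sum_(i < n) (if (i < 2)%N then x else y) = 2 * x + (n%:R - 2) * y.
Proof.
case: n => [|[|m]] // _; rewrite !big_ord_recl /=.
by rewrite sumr_const card_ord -mulr_natl -[m.+2]addn2 natrD; ring.
Qed.

Lemma affine_le0_near0 (R : realType) (a b c : R) : a < 0 -> 0 < c ->
  exists e0 : R, [/\ 0 < e0, e0 <= c &
    forall e, 0 < e -> e < e0 -> (1 - e) * a + e * b <= 0].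
Proof.
move=> a_lt0 c_gt0; have d_gt0 : 0 < `|b| - a by have := normr_ge0 b; lra.
exists (Num.min c (- a / (`|b| - a))); split.
- by rewrite lt_min c_gt0 divr_gt0 // oppr_gt0.
- by rewrite ge_min lexx.
move=> e e_gt0; rewrite lt_min => /andP[_]; rewrite ltr_pdivlMr // => e_small.
have : e * b <= e * `|b| by apply: ler_wpM2l; [exact: ltW | exact: ler_norm].
nra.
Qed.

Section SymmetricWeights.
Variables (R : realType) (n : nat) (phi : {set 'I_n} -> R) (a b : 'I_n -> R).
Hypothesis phi_tperm :
  forall (A : {set 'I_n}) i j, phi [set tperm i j x | x in A] = phi A.

Let freq i := \sum_(A : {set 'I_n}) phi A * (i \in A)%:R.

Lemma freq_tperm i j : freq i = freq j.
Proof.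
rewrite /freq (reindex_inj (imset_inj (@perm_inj _ (tperm i j)))) /=.
apply: eq_bigr => A _; rewrite phi_tperm.
by rewrite -[X in X \in _](tpermR i j) mem_imset //; apply: perm_inj.
Qed.

Lemma sum_phi_split i0 :
  \sum_(A : {set 'I_n}) phi A * \sum_i (if i \in A then a i else b i)
  = freq i0 * \sum_i a i + (\sum_(A : {set 'I_n}) phi A - freq i0) * \sum_i b i.
Proof.
under eq_bigr do rewrite mulr_sumr.
rewrite exchange_big !mulr_sumr -big_split /=; apply: eq_bigr => i _.
rewrite (freq_tperm i0 i) /freq !mulr_suml -sumrB mulr_suml -big_split /=.
by apply: eq_bigr => A _; case: (i \in A) => /=; ring.
Qed.

Lemma sum_freq i0 : n%:R * freq i0 = \sum_(A : {set 'I_n}) phi A * #|A|%:R.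
Proof.
have -> : n%:R * freq i0 = \sum_i freq i.
  by rewrite (eq_bigr _ (fun i _ => freq_tperm i i0)) sumr_const card_ord mulr_natl.
rewrite /freq exchange_big /=; apply: eq_bigr => A _.
rewrite -mulr_sumr -sum1_card natr_sum; congr (_ * _).
by rewrite [RHS]big_mkcond; apply: eq_bigr => i _; case: (i \in A).
Qed.

Hypothesis phi_range : forall A, 0 <= phi A <= 1.

(* Multiplied by n, the left side is sum_A phi A (|A| (P - N) + n N) by symmetry:
   the full set contributes at most n P and any other A at most (n-1) P + N. *)
Lemma sum_phi_le_full : (0 < n)%N -> 0 <= \sum_i a i ->
  (n%:R - 1) * \sum_i a i + \sum_i b i <= 0 ->
  \sum_(A : {set 'I_n}) phi A * \sum_i (if i \in A then a i else b i) <= \sum_i a i.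
Proof.
move=> n_gt0; set P := \sum_i a i; set N := \sum_i b i => P_ge0 PN_le0.
have n_gt0R : 0 < (n%:R : R) by rewrite ltr0n.
rewrite (sum_phi_split (Ordinal n_gt0)) -/P -/N -(ler_pM2l n_gt0R).
rewrite [leLHS](_ : _ = n%:R * freq (Ordinal n_gt0) * (P - N)
                       + n%:R * (\sum_(A : {set 'I_n}) phi A) * N); last by ring.
rewrite sum_freq [n%:R * \sum__ _]mulr_sumr.
rewrite (mulr_suml _ _ _ (P - N)) (mulr_suml _ _ _ N) -big_split /=.
rewrite [leRHS](_ : _ = \sum_(A : {set 'I_n}) if A == setT then n%:R * P else 0);
  last by rewrite -big_mkcond big_pred1_eq.
apply: ler_sum => A _; have /andP[phi_ge0 phi_le1] := phi_range A.
have [A_full|A_neq] := eqVneq A setT.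
  rewrite A_full cardsT card_ord [leLHS](_ : _ = phi setT * (n%:R * P)); last by ring.
  by rewrite ler_piMl -?A_full // mulr_ge0 // ltW.
have cardA : (#|A|%:R : R) <= n%:R - 1.
  have := @proper_card _ A setT; rewrite properT A_neq cardsT card_ord.
  by rewrite lerBrDr natr1 ler_nat; apply.
rewrite [leLHS](_ : _ = phi A * (#|A|%:R * (P - N) + n%:R * N)); last by ring.
apply: mulr_ge0_le0 => //.
have : #|A|%:R * (P - N) <= (n%:R - 1) * (P - N).
  by apply: ler_wpM2r => //; nra.
lra.
Qed.

End SymmetricWeights.

Section Environment.
Variables (R : realType) (n : nat) (M : R).
Hypothesis M_gt0 : 0 < M.

Lemma vval_gt0 :
  [/\ (0 < vval M LmM2) = false, (0 < vval M Lm1) = false,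
      (0 < vval M L1) = true & (0 < vval M LM) = true].
Proof.
rewrite /= ltr01 M_gt0; split=> //; apply/negbTE; rewrite -leNgt ?oppr_le0 //.
exact: sqr_ge0.
Qed.

Lemma sum_prob_sign (eps : R) (i : 'I_n) (b : bool) :
  \sum_(x | (0 < vval M x) == b) prob_i eps i x = 1/2.
Proof.
case: vval_gt0 => p1 p2 p3 p4.
by rewrite big_mkcond sum_vlab /= p1 p2 p3 p4 /prob_i; case: b; case: ifP => _ /=; lra.
Qed.

(* Not a conditional mean: the event [0 < v_i] = b has probability 1/2. *)
Definition sign_mean (eps : R) (b : bool) (i : 'I_n) : R :=
  \sum_(x | (0 < vval M x) == b) prob_i eps i x * vval M x.

Lemma chi_eqE (A : {set 'I_n}) (v : profile n) :
  (chi M v == A) = (v \in family (fun j => [pred x | (0 < vval M x) == (j \in A)])).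
Proof.
apply/eqP/familyP => [<- j | vA]; first by rewrite !inE.
by apply/setP => j; have := vA j; rewrite !inE => /eqP.
Qed.

Lemma sum_chi_eq (eps : R) (A : {set 'I_n}) (i : 'I_n) :
  \sum_(v : profile n | chi M v == A) prob_profile eps v * vval M (v i)
  = (1/2) ^+ n.-1 * sign_mean eps (i \in A) i.
Proof.
pose F j x := prob_i eps j x * (if j == i then vval M x else 1).
rewrite (eq_bigl _ _ (chi_eqE A)).
transitivity (\sum_(v in family (fun j => [pred x | (0 < vval M x) == (j \in A)]))
                 \prod_j F j (v j)).
  apply: eq_bigr => v _; rewrite /prob_profile (bigD1 i) //= [RHS](bigD1 i) //=.
  rewrite /F eqxx mulrAC; congr (_ * _).
  by apply: eq_bigr => j /negbTE ->; rewrite mulr1.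
rewrite -bigA_distr_big_dep (bigD1 i) //= mulrC; congr (_ * _).
  rewrite (eq_bigr (fun=> 1/2)) ?prodr_const ?cardC1 ?card_ord // => j /negbTE ji.
  by rewrite -(sum_prob_sign eps j (j \in A)); apply: eq_bigr => x _; rewrite /F ji mulr1.
by apply: eq_bigr => x _; rewrite /F eqxx.
Qed.

Definition set_profile (A : {set 'I_n}) : profile n :=
  [ffun i => if i \in A then L1 else Lm1].

Lemma chi_set_profile (A : {set 'I_n}) : chi M (set_profile A) = A.
Proof.
case: vval_gt0 => _ p2 p3 _.
by apply/setP => j; rewrite inE ffunE; case: (j \in A).
Qed.

Lemma permute_set_profile (A : {set 'I_n}) (i j : 'I_n) :
  permute_profile (tperm i j) (set_profile A) = set_profile [set tperm i j x | x in A].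
Proof.
apply/ffunP => x; rewrite !ffunE.
by rewrite -{2}(tpermK i j x) mem_imset //; apply: perm_inj.
Qed.

Lemma welfare_ordinal (eps : R) (f : profile n -> R) : ordinal_scf M f ->
  welfare M eps f = (1/2) ^+ n.-1 *
    \sum_(A : {set 'I_n}) f (set_profile A) * \sum_i sign_mean eps (i \in A) i.
Proof.
move=> f_ord; rewrite /welfare (partition_big (chi M) predT) //= mulr_sumr.
apply: eq_bigr => A _.
transitivity (f (set_profile A) *
  \sum_i \sum_(v | chi M v == A) prob_profile eps v * vval M (v i)).
  rewrite exchange_big mulr_sumr; apply: eq_bigr => v /eqP chi_v.
  by rewrite (f_ord v (set_profile A)) ?chi_set_profile // mulrCA mulr_sumr.
rewrite (eq_bigr _ (fun i _ => sum_chi_eq eps A i)).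
by rewrite -mulr_sumr mulrCA.
Qed.

Lemma welfare_unanimity (eps : R) :
  welfare M eps (@unanimity R n M) = (1/2) ^+ n.-1 * \sum_i sign_mean eps true i.
Proof.
rewrite welfare_ordinal; last by move=> v v' chi_vv'; rewrite /unanimity chi_vv'.
congr (_ * _); rewrite (bigD1 setT) //= [X in _ + X]big1 ?addr0 => [|A A_neq].
  rewrite /unanimity chi_set_profile cardsT card_ord eqxx mul1r.
  by apply: eq_bigr => i _; rewrite in_setT.
rewrite /unanimity chi_set_profile.
have := @proper_card _ A setT; rewrite properT A_neq cardsT card_ord => /(_ isT).
by move/ltn_eqF ->; rewrite mul0r.
Qed.

Lemma prob_i_ge0 (eps : R) (i : 'I_n) (x : vlab) :
  0 <= eps <= 1/2 -> 0 <= prob_i eps i x.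
Proof. by case/andP=> e0 e1; rewrite /prob_i; case: ifP; case: x => _; lra. Qed.

Lemma sign_mean_true_ge0 (eps : R) (i : 'I_n) :
  0 <= eps <= 1/2 -> 0 <= sign_mean eps true i.
Proof.
move=> eps_range; apply: sumr_ge0 => x /eqP x_gt0.
by rewrite mulr_ge0 ?prob_i_ge0 // ltW.
Qed.

(* The sum over the n sets A of size n-1 of sum_i sign_mean eps (i \in A) i. *)
Definition near_unanimous_value (eps : R) : R :=
  (n%:R - 1) * \sum_(i < n) sign_mean eps true i + \sum_(i < n) sign_mean eps false i.

Lemma welfare_le_unanimity (eps : R) (f : profile n -> R) :
  (0 < n)%N -> 0 <= eps <= 1/2 -> near_unanimous_value eps <= 0 ->
  is_SCF f -> ordinal_scf M f -> anonymous f ->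
  welfare M eps f <= welfare M eps (@unanimity R n M).
Proof.
move=> n_gt0 eps_range near_le0 f_scf f_ord f_anon.
rewrite welfare_ordinal // welfare_unanimity ler_pM2l ?exprn_gt0 //; last lra.
have sign_mean_if (b : bool) i :
  sign_mean eps b i = if b then sign_mean eps true i else sign_mean eps false i.
  by case: b.
under eq_bigr do under eq_bigr do rewrite sign_mean_if.
apply: sum_phi_le_full => //.
- by move=> A i j; rewrite -permute_set_profile -f_anon.
- by apply: sumr_ge0 => i _; apply: sign_mean_true_ge0.
Qed.

Lemma sign_mean_affine (eps : R) (b : bool) (i : 'I_n) :
  sign_mean eps b i = (1 - eps) * sign_mean 0 b i + eps * sign_mean 1 b i.
Proof.
rewrite /sign_mean !mulr_sumr -big_split /=; apply: eq_bigr => x _.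
by rewrite /prob_i; case: ifP => _; case: x; ring.
Qed.

Lemma near_unanimous_value_affine (eps : R) :
  near_unanimous_value eps
  = (1 - eps) * near_unanimous_value 0 + eps * near_unanimous_value 1.
Proof.
rewrite /near_unanimous_value.
under eq_bigr do rewrite sign_mean_affine.
under [X in _ + X]eq_bigr do rewrite sign_mean_affine.
by rewrite !big_split /= -!mulr_sumr; ring.
Qed.

Lemma sign_mean0 (b : bool) (i : 'I_n) :
  sign_mean 0 b i
  = if (i < 2)%N then (if b then M else - M ^+ 2) / 2 else (if b then 1 else -1) / 2.
Proof.
case: vval_gt0 => p1 p2 p3 p4.
rewrite /sign_mean big_mkcond sum_vlab p1 p2 p3 p4 /prob_i.
by case: b; case: ifP => _ /=; ring.
Qed.

Lemma near_unanimous_value0_lt0 : (3 <= n)%N -> condA n M -> near_unanimous_value 0 < 0.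
Proof.
move=> n_ge3 condA_lt0; rewrite /near_unanimous_value.
under eq_bigr do rewrite sign_mean0.
under [X in _ + X]eq_bigr do rewrite sign_mean0.
rewrite !sum_high_low ?(leq_trans _ n_ge3) //.
have n_gt0 : 0 < (n%:R : R) by rewrite ltr0n (leq_trans _ n_ge3).
rewrite -(pmulr_rlt0 _ (_ : 0 < 2 / n%:R)) ?divr_gt0 //.
apply: le_lt_trans condA_lt0; rewrite le_eqVlt; apply/orP; left; apply/eqP.
by field; rewrite lt0r_neq0.
Qed.

End Environment.

Theorem lemma4 (R : realType) (n : nat) (M : R) :
  (3 <= n)%N -> 0 < M -> condA n M -> condB n M ->
  exists eps0 : R, 0 < eps0 /\
    forall eps : R, 0 < eps -> eps < eps0 ->
      forall f : profile n -> R,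
        is_SCF f -> ordinal_scf M f -> anonymous f ->
        welfare M eps f <= welfare M eps (@unanimity R n M).
Proof.
move=> n_ge3 M_gt0 condA_lt0 _.
have [|e0 [e0_gt0 e0_le eps_small]] := affine_le0_near0
  (near_unanimous_value n M 1) (near_unanimous_value0_lt0 M_gt0 n_ge3 condA_lt0)
  (_ : 0 < 1/2); first lra.
exists e0; split=> // eps eps_gt0 eps_lt f.
apply: welfare_le_unanimity; rewrite ?(leq_trans _ n_ge3) //; first lra.
by rewrite near_unanimous_value_affine eps_small.
Qed.
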